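(* Let $X\in\mathbb{R}^{N\times D}$ with rows $x_n^\top$ have SVD $X^\top=U\mathrm{diag}(\lambda)V^\top+\bar U\mathrm{diag}(\bar\lambda)\bar V^\top$ where $U\in\mathbb{R}^{D\times M}$ holds the top-$M$ right singular vectors, $[U,\bar U]$ is orthogonal, $\lambda_1$ is the largest singular value and $\bar\lambda_1$ the $(M+1)$-st largest singular value (zero if none). Let $\phi(y,a)$ be twice differentiable in $a$, let $p(\beta)$ be a twice differentiable prior, and consider the exact posterior $\log p(\beta\mid X,Y)=\log p(\beta)+\sum_n\phi(y_n,x_n^\top\beta)+\mathrm{const}$ and the approximate posterior $\log\tilde p(\beta\mid X,Y)=\log p(\beta)+\sum_n\phi(y_n,x_n^\top UU^\top\beta)+\mathrm{const}$, with maximizers $\bar\mu$ and $\hat\mu$ respectively. Assume $-\log p(\beta\mid X,Y)$ is $\alpha$-strongly convex ($\alpha>0$). Then there is $A\in\mathbb{R}^N$ with each $A_n$ lying between $x_n^\top UU^\top\hat\mu$ and $x_n^\top\hat\mu$ such that $$\|\hat\mu-\bar\mu\|_2\le\frac{\bar\lambda_1\big(\|\vec\phi'(Y,X\hat\mu)\|_2+\lambda_1\|\bar U^\top\hat\mu\|_2\,\|\vec\phi''(Y,A)\|_\infty\big)}{\alpha}.$$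
   Context: For $B\in\mathbb{R}^N$, $\vec\phi'(Y,B)$ and $\vec\phi''(Y,B)$ are the vectors with entries $\frac{\partial}{\partial a}\phi(y_n,a)|_{a=B_n}$ and $\frac{\partial^2}{\partial a^2}\phi(y_n,a)|_{a=B_n}$. *)

From HB Require Import structures.
From Stdlib Require Import Reals.
From mathcomp Require Import all_boot.

Set Implicit Arguments.
Unset Strict Implicit.
Unset Printing Implicit Defensive.

Local Open Scope R_scope.

Lemma Rplus_assoc' : associative Rplus.
Proof. by move=> x y z; rewrite Rplus_assoc. Qed.
Lemma Rplus_comm' : commutative Rplus.
Proof. exact: Rplus_comm. Qed.
Lemma Rplus_0_l' : left_id R0 Rplus.
Proof. exact: Rplus_0_l. Qed.
HB.instance Definition _ := Monoid.isComLaw.Build R R0 Rplus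
  Rplus_assoc' Rplus_comm' Rplus_0_l'.

Definition Rsum (n : nat) (F : 'I_n -> R) : R := \big[Rplus/R0]_(i < n) F i.

Definition vec (n : nat) := 'I_n -> R.
Definition mat (n m : nat) := 'I_n -> 'I_m -> R.

Definition vadd n (u v : vec n) : vec n := fun i => u i + v i.
Definition vsub n (u v : vec n) : vec n := fun i => u i - v i.
Definition vscale n (a : R) (v : vec n) : vec n := fun i => a * v i.
Definition dot n (u v : vec n) : R := Rsum (fun i => u i * v i).
Definition norm2 n (v : vec n) : R := sqrt (Rsum (fun i => v i ^ 2)).
Definition norm_inf n (v : vec n) : R := \big[Rmax/R0]_(i < n) Rabs (v i).

Definition mulmv n m (A : mat n m) (v : vec m) : vec n :=
  fun i => Rsum (fun j => A i j * v j).
Definition mulmtv n m (A : mat n m) (v : vec n) : vec m :=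
  fun j => Rsum (fun i => A i j * v i).

Definition orthogonal n (Q : mat n n) : Prop :=
  forall i j : 'I_n, Rsum (fun k => Q k i * Q k j) = if i == j then 1 else 0.

(* Full SVD of X^T (a D x N matrix):  X^T = W S Z^T,
   W (D x D) and Z (N x N) orthogonal, S rectangular diagonal with diagonal
   entries sigma 0 >= sigma 1 >= ... >= sigma (min D N - 1) >= 0.
   The right singular vectors of X are the columns of W. *)
Definition is_svdT (N D : nat) (X : mat N D) (W : mat D D) (Z : mat N N)
    (sigma : nat -> R) : Prop :=
  orthogonal W /\ orthogonal Z /\
  (forall k, (k < minn D N)%N -> 0 <= sigma k) /\
  (forall k, (k.+1 < minn D N)%N -> sigma k.+1 <= sigma k) /\
  (forall (n : 'I_N) (d : 'I_D),
     X n d = Rsum (fun i : 'I_D => Rsum (fun j : 'I_N =>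
               if nat_of_ord i == nat_of_ord j
               then W d i * sigma i * Z n j else 0))).

Definition lam1 (N D : nat) (sigma : nat -> R) : R :=
  if (0 < minn D N)%N then sigma 0%N else 0.
Definition lambar1 (N D M : nat) (sigma : nat -> R) : R :=
  if (M < minn D N)%N then sigma M else 0.

(* U = first M columns of W, Ubar = remaining D - M columns.
   U U^T beta = sum_{i < M} w_i (w_i . beta). *)
Definition UUt (D M : nat) (W : mat D D) (beta : vec D) : vec D :=
  fun d => Rsum (fun i : 'I_D =>
     if (nat_of_ord i < M)%N then W d i * mulmtv W beta i else 0).
(* Ubar^T beta, written as a vector of R^D padded with zeros in the first
   M coordinates (same Euclidean norm as Ubar^T beta in R^(D-M)). *)
Definition UbarT (D M : nat) (W : mat D D) (beta : vec D) : vec D :=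
  fun i => if (M <= nat_of_ord i)%N then mulmtv W beta i else 0.

Definition has_gradient n (f : vec n -> R) (x g : vec n) : Prop :=
  forall eps, 0 < eps -> exists delta, 0 < delta /\
    forall h : vec n, norm2 h < delta ->
      Rabs (f (vadd x h) - f x - dot g h) <= eps * norm2 h.

Definition twice_differentiable n (f : vec n -> R) : Prop :=
  exists (g : vec n -> vec n) (H : vec n -> 'I_n -> vec n),
    forall x, has_gradient f x (g x) /\
      forall i, has_gradient (fun y => g y i) x (H x i).

Definition strongly_convex n (alpha : R) (f : vec n -> R) : Prop :=
  forall (x y : vec n) (t : R), 0 <= t <= 1 ->
    f (vadd (vscale t x) (vscale (1 - t) y))
      <= t * f x + (1 - t) * f y - alpha / 2 * t * (1 - t) * (norm2 (vsub x y)) ^ 2.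

Definition is_maximizer n (f : vec n -> R) (x : vec n) : Prop :=
  forall y, f y <= f x.

Definition between (a b c : R) : Prop := Rmin b c <= a <= Rmax b c.

Definition log_post (N D : nat) (Ty : Type) (p : vec D -> R)
   (phi : Ty -> R -> R) (X : mat N D) (Y : 'I_N -> Ty) (beta : vec D) : R :=
  ln (p beta) + Rsum (fun n => phi (Y n) (mulmv X beta n)).
Definition approx_log_post (N D M : nat) (Ty : Type) (p : vec D -> R)
   (phi : Ty -> R -> R) (X : mat N D) (W : mat D D) (Y : 'I_N -> Ty)
   (beta : vec D) : R :=
  ln (p beta) + Rsum (fun n => phi (Y n) (mulmv X (UUt M W beta) n)).

From Stdlib Require Import Reals.
From mathcomp Require Import all_boot.
From Stdlib Require Import Lra ClassicalEpsilon FunctionalExtensionality.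

Set Implicit Arguments.
Unset Strict Implicit.
Unset Printing Implicit Defensive.

Local Open Scope R_scope.

(* Write g for the exact log posterior, gt for the approximate one, mubar and
   muhat for their maximisers, and d = mubar - muhat.  The prior term is the
   same in g and gt, so g - gt is a difference of data terms.  Moving from
   muhat towards mubar, strong concavity of g and maximality of muhat for gt
   force the increments of g - gt to grow at least like s (K - K s / 2) with
   K = alpha |d|^2; hence K is at most the derivative of g - gt at muhat in
   direction d (lemma [perturbed_maximizer]).  That derivative is
   sum_n phi'(X muhat)_n (X d)_n - phi'(X UU^T muhat)_n (X UU^T d)_n, which
   the mean value theorem rewrites as a gradient term against X (I - UU^T) d
   plus a Hessian term phi''(A) X (I - UU^T) muhat X UU^T d.  Cauchy-Schwarz
   and the SVD bounds |X (I - UU^T) v| <= lambar_1 |Ubar^T v| and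
   |X UU^T v| <= lambda_1 |v| give alpha |d|^2 <= B |d|, i.e. the theorem. *)

Lemma Rsum_ext n (F G : 'I_n -> R) : (forall i, F i = G i) -> Rsum F = Rsum G.
Proof. by move=> h; rewrite /Rsum; apply: eq_bigr => i _. Qed.

Lemma Rsum_add n (F G : 'I_n -> R) :
  Rsum (fun i => F i + G i) = Rsum F + Rsum G.
Proof. by rewrite /Rsum big_split. Qed.

Lemma Rsum_scal n c (F : 'I_n -> R) : Rsum (fun i => c * F i) = c * Rsum F.
Proof.
rewrite /Rsum; symmetry.
apply: (big_morph (fun x => c * x) (id1 := R0) (op1 := Rplus)).
  by move=> x y /=; rewrite Rmult_plus_distr_l.
by rewrite Rmult_0_r.
Qed.

Lemma Rsum_scalr n c (F : 'I_n -> R) : Rsum (fun i => F i * c) = Rsum F * c.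
Proof. by rewrite Rmult_comm -Rsum_scal; apply: Rsum_ext => i; ring. Qed.

Lemma Rsum_sub n (F G : 'I_n -> R) :
  Rsum (fun i => F i - G i) = Rsum F - Rsum G.
Proof.
rewrite (Rsum_ext (G := fun i => F i + -1 * G i)) => [|i]; last ring.
by rewrite Rsum_add Rsum_scal; ring.
Qed.

Lemma Rsum_zero n : Rsum (fun _ : 'I_n => 0) = 0.
Proof. by rewrite /Rsum big1. Qed.

Lemma Rsum_le n (F G : 'I_n -> R) : (forall i, F i <= G i) -> Rsum F <= Rsum G.
Proof.
move=> h; rewrite /Rsum; apply: (big_ind2 (fun x y => x <= y)) => //.
  exact: Rle_refl.
by move=> *; apply: Rplus_le_compat.
Qed.

Lemma Rsum_ge0 n (F : 'I_n -> R) : (forall i, 0 <= F i) -> 0 <= Rsum F.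
Proof. by move=> h; rewrite -(Rsum_zero n); apply: Rsum_le. Qed.

Lemma Rsum_swap n m (F : 'I_n -> 'I_m -> R) :
  Rsum (fun i => Rsum (fun j => F i j)) = Rsum (fun j => Rsum (fun i => F i j)).
Proof. by rewrite /Rsum exchange_big. Qed.

Lemma Rsum_delta n (F : 'I_n -> R) (j : 'I_n) :
  Rsum (fun i => if nat_of_ord i == nat_of_ord j then F i else 0) = F j.
Proof.
rewrite /Rsum -(big_pred1_eq (Monoid.Law.clone _ _ Rplus _) j F) big_mkcond.
exact: eq_bigr.
Qed.

Lemma Rsum_delta_out n (F : 'I_n -> R) j : (n <= j)%N ->
  Rsum (fun i : 'I_n => if nat_of_ord i == j then F i else 0) = 0.
Proof.
move=> hj; rewrite /Rsum big1 // => i _.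
by case: eqP => // ei; move: (ltn_ord i); rewrite ei ltnNge hj.
Qed.

Lemma Rsum_sqr n (F : 'I_n -> R) :
  (Rsum F) ^ 2 = Rsum (fun i => Rsum (fun j => F i * F j)).
Proof.
rewrite /= Rmult_1_r -Rsum_scalr; apply: Rsum_ext => i.
by rewrite -Rsum_scal.
Qed.

Lemma norm2_ge0 n (v : vec n) : 0 <= norm2 v.
Proof. exact: sqrt_pos. Qed.

Lemma norm2_ext n (u v : vec n) : (forall i, u i ^ 2 = v i ^ 2) -> norm2 u = norm2 v.
Proof. by move=> h; rewrite /norm2; f_equal; apply: Rsum_ext. Qed.

Lemma norm2_vsubC n (u v : vec n) : norm2 (vsub u v) = norm2 (vsub v u).
Proof. by apply: norm2_ext => i; rewrite /vsub; ring. Qed.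

Lemma norm_inf_ge n (q : vec n) (i : 'I_n) : Rabs (q i) <= norm_inf q.
Proof.
rewrite /norm_inf.
have : i \in index_enum 'I_n by rewrite mem_index_enum.
elim: (index_enum 'I_n) => [|a r IH] //=.
rewrite big_cons inE; case/orP => [/eqP <- | hr]; first exact: Rmax_l.
exact: Rle_trans (IH hr) (Rmax_r _ _).
Qed.

Lemma norm_inf_ge0 n (q : vec n) : 0 <= norm_inf q.
Proof.
rewrite /norm_inf; apply: (big_ind (fun x => 0 <= x)); first exact: Rle_refl.
  by move=> x y hx _; apply: Rle_trans hx (Rmax_l _ _).
by move=> i _; apply: Rabs_pos.
Qed.

(* Cauchy-Schwarz, via Lagrange's identity
   sum_(i,j) (a_i b_j - a_j b_i)^2 = 2 (|a|^2 |b|^2 - <a,b>^2). *)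
Lemma cauchy_schwarz n (a b : vec n) :
  Rsum (fun i => a i * b i) <= norm2 a * norm2 b.
Proof.
have lagrange : (Rsum (fun i => a i * b i)) ^ 2
                <= Rsum (fun i => a i ^ 2) * Rsum (fun i => b i ^ 2).
  have h0 : 0 <= Rsum (fun i => Rsum (fun j => (a i * b j - a j * b i) ^ 2)).
    by apply: Rsum_ge0 => i; apply: Rsum_ge0 => j; apply: pow2_ge_0.
  have e : Rsum (fun i => Rsum (fun j => (a i * b j - a j * b i) ^ 2)) =
     Rsum (fun i => Rsum (fun j => a i ^ 2 * b j ^ 2))
     + Rsum (fun i => Rsum (fun j => a j ^ 2 * b i ^ 2))
     - 2 * Rsum (fun i => Rsum (fun j => a i * b i * (a j * b j))).
    rewrite -Rsum_scal -Rsum_add -Rsum_sub; apply: Rsum_ext => i.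
    rewrite -Rsum_scal -Rsum_add -Rsum_sub; apply: Rsum_ext => j; ring.
  have eswap : Rsum (fun i => Rsum (fun j => a j ^ 2 * b i ^ 2)) =
               Rsum (fun i => Rsum (fun j => a i ^ 2 * b j ^ 2)) by rewrite Rsum_swap.
  have eprod : Rsum (fun i => Rsum (fun j => a i ^ 2 * b j ^ 2)) =
               Rsum (fun i => a i ^ 2) * Rsum (fun i => b i ^ 2).
    by rewrite -Rsum_scalr; apply: Rsum_ext => i; rewrite Rsum_scal.
  rewrite -Rsum_sqr in e; lra.
have ha : 0 <= Rsum (fun i => a i ^ 2) by apply: Rsum_ge0 => i; apply: pow2_ge_0.
have hb : 0 <= Rsum (fun i => b i ^ 2) by apply: Rsum_ge0 => i; apply: pow2_ge_0.
rewrite /norm2 -sqrt_mult_alt //.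
apply: Rle_trans (Rle_abs _) _.
rewrite -sqrt_Rsqr_abs; apply: sqrt_le_1_alt.
by move: lagrange; rewrite /Rsqr /= Rmult_1_r.
Qed.

Lemma weighted_sum_le n (q u v : vec n) :
  Rsum (fun i => q i * u i * v i) <= norm_inf q * (norm2 u * norm2 v).
Proof.
apply: Rle_trans (_ : Rsum (fun i => norm_inf q * (Rabs (u i) * Rabs (v i))) <= _).
  apply: Rsum_le => i; apply: Rle_trans (Rle_abs _) _.
  rewrite !Rabs_mult Rmult_assoc.
  apply: Rmult_le_compat_r; last exact: norm_inf_ge.
  by apply: Rmult_le_pos; apply: Rabs_pos.
rewrite Rsum_scal; apply: Rmult_le_compat_l; first exact: norm_inf_ge0.
have eabs : forall w : vec n, norm2 (fun i => Rabs (w i)) = norm2 w.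
  by move=> w; apply: norm2_ext => i; rewrite pow2_abs.
by rewrite -(eabs u) -(eabs v); apply: cauchy_schwarz.
Qed.

Lemma orthogonal_norm n (Q : mat n n) (c : vec n) : orthogonal Q ->
  Rsum (fun k => (Rsum (fun i => Q k i * c i)) ^ 2) = Rsum (fun i => c i ^ 2).
Proof.
move=> hQ.
rewrite (Rsum_ext (fun k => Rsum_sqr _)) Rsum_swap.
apply: Rsum_ext => i; rewrite Rsum_swap.
rewrite (Rsum_ext (G := fun j => if nat_of_ord j == nat_of_ord i then c i ^ 2 else 0)).
  exact: (Rsum_delta (fun _ => c i ^ 2)).
move=> j.
rewrite (Rsum_ext (G := fun k => c i * c j * (Q k i * Q k j))) => [|k]; last ring.
rewrite Rsum_scal hQ (_ : (i == j) = (nat_of_ord j == nat_of_ord i)) 1?eq_sym //.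
by case: eqP => [/val_inj -> | _]; ring.
Qed.

(* Bessel: the coefficients [W^T d] of [d] in an orthonormal frame [W] have
   norm at most that of [d]; this follows from |d - W W^T d|^2 >= 0. *)
Lemma bessel n (W : mat n n) (d : vec n) : orthogonal W ->
  Rsum (fun i => mulmtv W d i ^ 2) <= Rsum (fun k => d k ^ 2).
Proof.
move=> hW.
set w := mulmtv W d.
set v := fun k => Rsum (fun i => W k i * w i).
have h0 : 0 <= Rsum (fun k => (d k - v k) ^ 2).
  by apply: Rsum_ge0 => k; apply: pow2_ge_0.
have expand : Rsum (fun k => (d k - v k) ^ 2) = Rsum (fun k => d k ^ 2)
    - 2 * Rsum (fun k => d k * v k) + Rsum (fun k => v k ^ 2).
  by rewrite -Rsum_scal -Rsum_sub -Rsum_add; apply: Rsum_ext => k; ring.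
have norm_v : Rsum (fun k => v k ^ 2) = Rsum (fun i => w i ^ 2).
  exact: orthogonal_norm.
have dot_dv : Rsum (fun k => d k * v k) = Rsum (fun i => w i ^ 2).
  rewrite (Rsum_ext (G := fun k => Rsum (fun i => w i * (W k i * d k)))); last first.
    by move=> k; rewrite /v -Rsum_scal; apply: Rsum_ext => i; ring.
  rewrite Rsum_swap; apply: Rsum_ext => i; rewrite Rsum_scal /w /mulmtv; ring.
lra.
Qed.

(* The point [s u + (1 - s) v] of the segment from [v] (at [s = 0]) to [u]
   (at [s = 1]), written as in [strongly_convex]. *)
Definition segment n (s : R) (u v : vec n) : vec n :=
  vadd (vscale s u) (vscale (1 - s) v).

Lemma segmentE n s (u v : vec n) : segment s u v = fun i => v i + s * vsub u v i.
Proof. by apply: functional_extensionality => i; rewrite /segment /vadd /vscale /vsub; ring. Qed.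

Lemma segment0 n (u v : vec n) : segment 0 u v = v.
Proof. by rewrite segmentE; apply: functional_extensionality => i; ring. Qed.

Lemma mulmv_axpy n m (A : mat n m) (x y : vec m) s k :
  mulmv A (fun i => x i + s * y i) k = mulmv A x k + s * mulmv A y k.
Proof. by rewrite /mulmv -Rsum_scal -Rsum_add; apply: Rsum_ext => i; ring. Qed.

Lemma mulmv_sub n m (A : mat n m) (x y : vec m) k :
  mulmv A (vsub x y) k = mulmv A x k - mulmv A y k.
Proof. by rewrite /mulmv -Rsum_sub; apply: Rsum_ext => i; rewrite /vsub; ring. Qed.

Lemma mulmtv_sub n m (A : mat n m) (x y : vec n) k :
  mulmtv A (vsub x y) k = mulmtv A x k - mulmtv A y k.
Proof. by rewrite /mulmtv -Rsum_sub; apply: Rsum_ext => i; rewrite /vsub; ring. Qed.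

Lemma UUt_axpy D M (W : mat D D) (x y : vec D) s :
  UUt M W (fun i => x i + s * y i) = fun k => UUt M W x k + s * UUt M W y k.
Proof.
apply: functional_extensionality => k.
rewrite /UUt -(Rsum_scal s) -Rsum_add; apply: Rsum_ext => i.
case: ifP => _; last ring.
rewrite /mulmtv (Rsum_ext (G := fun j => W j i * x j + s * (W j i * y j))) => [|j].
  by rewrite Rsum_add Rsum_scal; ring.
ring.
Qed.

Lemma mulmtv_UUt D M (W : mat D D) (v : vec D) k : orthogonal W ->
  mulmtv W (UUt M W v) k = if (nat_of_ord k < M)%N then mulmtv W v k else 0.
Proof.
move=> hW; rewrite {1}/mulmtv /UUt.
rewrite (Rsum_ext (G := fun d => Rsum (fun i : 'I_D =>
    if (nat_of_ord i < M)%N then mulmtv W v i * (W d k * W d i) else 0))); last first.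
  by move=> d; rewrite -Rsum_scal; apply: Rsum_ext => i; case: ifP => _; ring.
rewrite Rsum_swap.
rewrite (Rsum_ext (G := fun i : 'I_D => if nat_of_ord i == nat_of_ord k then
    (if (nat_of_ord k < M)%N then mulmtv W v k else 0) else 0)).
  exact: (Rsum_delta (fun _ => if (nat_of_ord k < M)%N then mulmtv W v k else 0)).
move=> i; case: (ltnP i M) => hiM.
  rewrite Rsum_scal hW; case: eqP => [-> | ne].
    by rewrite eqxx hiM; ring.
  by case: eqP => [/val_inj e | _]; [case: ne | ring].
rewrite Rsum_zero; case: eqP => // e.
by move: hiM; rewrite e leqNgt => /negbTE ->.
Qed.

Lemma mulmtv_residual D M (W : mat D D) (v : vec D) k : orthogonal W ->
  mulmtv W (vsub v (UUt M W v)) k = UbarT M W v k.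
Proof. by move=> hW; rewrite mulmtv_sub mulmtv_UUt // /UbarT; case: ltnP => _; ring. Qed.

Lemma norm_mulmtv_le D (W : mat D D) (v : vec D) : orthogonal W ->
  norm2 (mulmtv W v) <= norm2 v.
Proof. by move=> hW; apply: sqrt_le_1_alt; apply: bessel. Qed.

Lemma norm_UbarT_le D M (W : mat D D) (v : vec D) : orthogonal W ->
  norm2 (UbarT M W v) <= norm2 v.
Proof.
move=> hW; apply: Rle_trans (norm_mulmtv_le v hW).
apply: sqrt_le_1_alt; apply: Rsum_le => i; rewrite /UbarT; case: ifP => _.
  exact: Rle_refl.
by rewrite /= Rmult_0_l; apply: pow2_ge_0.
Qed.

Section SingularValues.
Variables (N D M : nat) (X : mat N D) (W : mat D D) (Z : mat N N) (sigma : nat -> R).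
Hypothesis svd : is_svdT X W Z sigma.

Lemma svd_orthogonal : orthogonal W.
Proof. by case: svd. Qed.

Lemma sigma_antitone k j : (k <= j)%N -> (j < minn D N)%N -> sigma j <= sigma k.
Proof.
case: svd => _ [_ [_ [hdec _]]] hkj.
rewrite -(subnKC hkj); elim: (j - k)%N => [|i IH] hj.
  by rewrite addn0; apply: Rle_refl.
rewrite addnS in hj *.
exact: Rle_trans (hdec _ hj) (IH (ltnW hj)).
Qed.

Lemma lam1_ge0 : 0 <= lam1 N D sigma.
Proof. by case: svd => _ [_ [hpos _]]; rewrite /lam1; case: ifP => h; [apply: hpos | apply: Rle_refl]. Qed.

Lemma lambar1_ge0 : 0 <= lambar1 N D M sigma.
Proof. by case: svd => _ [_ [hpos _]]; rewrite /lambar1; case: ifP => h; [apply: hpos | apply: Rle_refl]. Qed.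

(* [S^T w], the action of the rectangular diagonal factor on [w : R^D]. *)
Definition svd_diag (w : vec D) : vec N :=
  fun j => Rsum (fun i : 'I_D => if nat_of_ord i == nat_of_ord j then sigma i * w i else 0).

Lemma mulmv_svd (v : vec D) (n : 'I_N) :
  mulmv X v n = Rsum (fun j => Z n j * svd_diag (mulmtv W v) j).
Proof.
case: svd => _ [_ [_ [_ hX]]].
pose G := fun (i : 'I_D) (j : 'I_N) (d : 'I_D) =>
  if nat_of_ord i == nat_of_ord j then W d i * sigma i * Z n j * v d else 0.
transitivity (Rsum (fun i => Rsum (fun j => Rsum (fun d => G i j d)))).
  rewrite /mulmv (Rsum_ext (G := fun d => Rsum (fun i => Rsum (fun j => G i j d)))).
    by rewrite Rsum_swap; apply: Rsum_ext => i; rewrite Rsum_swap.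
  move=> d; rewrite hX -Rsum_scalr; apply: Rsum_ext => i; rewrite -Rsum_scalr.
  by apply: Rsum_ext => j; rewrite /G; case: eqP => _; ring.
rewrite [RHS](Rsum_ext (G := fun j => Rsum (fun i => Rsum (fun d => G i j d)))).
  by rewrite Rsum_swap.
move=> j; rewrite /svd_diag -Rsum_scal; apply: Rsum_ext => i.
rewrite /G /mulmtv; case: eqP => _; last by rewrite Rmult_0_r Rsum_zero.
by rewrite -!Rsum_scal; apply: Rsum_ext => d; ring.
Qed.

(* Hence [|X v|^2 = sum_(i < min D N) (sigma_i (W^T v)_i)^2], since [Z] is
   orthogonal. *)
Lemma norm_mulmv_svd (v : vec D) :
  Rsum (fun n => mulmv X v n ^ 2) =
  Rsum (fun i : 'I_D => if (nat_of_ord i < N)%N then (sigma i * mulmtv W v i) ^ 2 else 0).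
Proof.
have hZ : orthogonal Z by case: svd => _ [].
set w := mulmtv W v; pose c := fun i : 'I_D => (sigma i * w i) ^ 2.
rewrite (Rsum_ext (G := fun n => (Rsum (fun j => Z n j * svd_diag w j)) ^ 2)); last first.
  by move=> n; rewrite mulmv_svd.
rewrite orthogonal_norm // (Rsum_ext (G := fun j : 'I_N => Rsum (fun i : 'I_D =>
           if nat_of_ord i == nat_of_ord j then c i else 0))); last first.
  move=> j; rewrite /svd_diag; case: (ltnP j D) => hj; last first.
    by rewrite !Rsum_delta_out //= Rmult_0_l.
  have := Rsum_delta (fun i => sigma i * w i) (Ordinal hj).
  by have := Rsum_delta c (Ordinal hj); rewrite /= => -> ->.
rewrite Rsum_swap; apply: Rsum_ext => i.
rewrite (Rsum_ext (G := fun j : 'I_N => if nat_of_ord j == nat_of_ord i then c i else 0)).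
  case: (ltnP i N) => hi; last by rewrite Rsum_delta_out.
  exact: (Rsum_delta (fun _ => c i) (Ordinal hi)).
by move=> j; rewrite eq_sym.
Qed.

Lemma norm_mulmv_le (v g : vec D) (s : R) : 0 <= s ->
  (forall i : 'I_D, (nat_of_ord i < N)%N -> (sigma i * mulmtv W v i) ^ 2 <= s ^ 2 * g i ^ 2) ->
  norm2 (mulmv X v) <= s * norm2 g.
Proof.
move=> s0 hb; rewrite /norm2 norm_mulmv_svd.
rewrite -(sqrt_pow2 s s0) -sqrt_mult_alt; last exact: pow2_ge_0.
apply: sqrt_le_1_alt; rewrite -Rsum_scal; apply: Rsum_le => i.
case: ltnP => hi; first exact: hb.
by apply: Rmult_le_pos; apply: pow2_ge_0.
Qed.

Lemma sqr_scale_le a s w : 0 <= a -> a <= s -> (a * w) ^ 2 <= s ^ 2 * w ^ 2.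
Proof. by move=> h1 h2; rewrite Rpow_mult_distr; apply: Rmult_le_compat_r; [apply: pow2_ge_0 | apply: pow_incr]. Qed.

(* Only the singular values [sigma_M, sigma_(M+1), ...] act on the residual
   [v - U U^T v]: its image has norm at most [lambar_1 |Ubar^T v|]. *)
Lemma norm_residual_le (v : vec D) :
  norm2 (fun n => mulmv X v n - mulmv X (UUt M W v) n)
    <= lambar1 N D M sigma * norm2 (UbarT M W v).
Proof.
have [_ [_ [hpos _]]] := svd.
rewrite -(norm2_ext (u := mulmv X (vsub v (UUt M W v)))) => [|n]; last by rewrite mulmv_sub.
apply: norm_mulmv_le; first exact: lambar1_ge0.
move=> i hi; rewrite mulmtv_residual /UbarT; last exact: svd_orthogonal.
case: (leqP M i) => hMi; last by rewrite /=; lra.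
have hmin : (nat_of_ord i < minn D N)%N by rewrite leq_min ltn_ord hi.
apply: sqr_scale_le; first exact: hpos.
by rewrite /lambar1 (leq_ltn_trans hMi hmin); apply: sigma_antitone hMi hmin.
Qed.

(* All singular values are at most [lambda_1], so [|X U U^T v| <= lambda_1 |v|]. *)
Lemma norm_projected_le (v : vec D) :
  norm2 (mulmv X (UUt M W v)) <= lam1 N D sigma * norm2 v.
Proof.
have [_ [_ [hpos _]]] := svd.
apply: Rle_trans (_ : _ <= lam1 N D sigma * norm2 (mulmtv W v)) _; last first.
  by apply: Rmult_le_compat_l; [apply: lam1_ge0 | apply: norm_mulmtv_le svd_orthogonal].
apply: norm_mulmv_le; first exact: lam1_ge0.
move=> i hi; rewrite mulmtv_UUt; last exact: svd_orthogonal.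
have hmin : (nat_of_ord i < minn D N)%N by rewrite leq_min ltn_ord hi.
case: ifP => _; last by rewrite Rmult_0_r /= Rmult_0_l; apply: Rmult_le_pos; apply: pow2_ge_0.
apply: sqr_scale_le; first exact: hpos.
by rewrite /lam1 (leq_ltn_trans (leq0n i) hmin); apply: sigma_antitone (leq0n i) hmin.
Qed.

End SingularValues.

Lemma derivable_pt_lim_ext (f g : R -> R) x l : (forall y, f y = g y) ->
  derivable_pt_lim f x l -> derivable_pt_lim g x l.
Proof.
move=> e h eps he; have [d hd] := h eps he; exists d => h0 hh0 hlt.
by rewrite -!e; apply: hd.
Qed.

Lemma derivable_pt_lim_Rsum n (F : 'I_n -> R -> R) (L : 'I_n -> R) x :
  (forall i, derivable_pt_lim (F i) x (L i)) ->
  derivable_pt_lim (fun s => Rsum (fun i => F i s)) x (Rsum L).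
Proof.
move=> h; rewrite /Rsum; elim: (index_enum _) => [|i r IH].
  apply: (derivable_pt_lim_ext (f := fct_cte 0)) => [y|]; first by rewrite big_nil.
  by rewrite big_nil; apply: derivable_pt_lim_const.
rewrite big_cons; apply: (derivable_pt_lim_ext (f := (F i + fun s => \big[Rplus/R0]_(j <- r) F j s)%F)).
  by move=> y; rewrite big_cons.
exact: derivable_pt_lim_plus.
Qed.

Lemma data_term_derivative n (F F' : 'I_n -> R -> R) (a b : vec n) :
  (forall i z, derivable_pt_lim (F i) z (F' i z)) ->
  derivable_pt_lim (fun s => Rsum (fun i => F i (a i + s * b i))) 0
    (Rsum (fun i => F' i (a i) * b i)).
Proof.
move=> hF; apply: (derivable_pt_lim_Rsum (F := fun i s => F i (a i + s * b i))) => i.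
have hline : derivable_pt_lim (fun s => a i + s * b i) 0 (b i).
  move=> eps heps; exists (mkposreal 1 Rlt_0_1) => h hh0 _.
  have -> : (a i + (0 + h) * b i - (a i + 0 * b i)) / h - b i = 0 by field.
  by rewrite Rabs_R0.
have := derivable_pt_lim_comp _ _ _ _ _ hline (hF i (a i + 0 * b i)).
by rewrite Rmult_0_l Rplus_0_r; apply: derivable_pt_lim_ext.
Qed.

Lemma mvt_between (f f' : R -> R) (c a : R) :
  (forall z, derivable_pt_lim f z (f' z)) ->
  exists A, between A c a /\ f a - f c = f' A * (a - c).
Proof.
move=> hf; case: (Rtotal_order c a) => [lt|[eq|gt]].
- have [A [e hA]] := MVT_cor2 f f' c a lt (fun z _ => hf z).
  by exists A; split=> //; rewrite /between Rmin_left ?Rmax_right; lra.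
- exists a; subst; split; last ring.
  by rewrite /between Rmin_left ?Rmax_right; lra.
- have [A [e hA]] := MVT_cor2 f f' a c gt (fun z _ => hf z).
  exists A; split; last lra.
  by rewrite /between Rmin_right ?Rmax_left; lra.
Qed.

Lemma vec_choice n (P : 'I_n -> R -> Prop) :
  (forall i, exists x, P i x) -> exists A : vec n, forall i, P i (A i).
Proof.
move=> h; exists (fun i => proj1_sig (constructive_indefinite_description _ (h i))).
by move=> i; apply: proj2_sig.
Qed.

Lemma mvt_decomposition n (F' F'' : 'I_n -> R -> R) (a b c e : vec n) :
  (forall i z, derivable_pt_lim (F' i) z (F'' i z)) ->
  exists A : vec n, (forall i, between (A i) (c i) (a i)) /\
    Rsum (fun i => F' i (a i) * b i) - Rsum (fun i => F' i (c i) * e i) =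
    Rsum (fun i => F' i (a i) * (b i - e i))
    + Rsum (fun i => F'' i (A i) * (a i - c i) * e i).
Proof.
move=> hF; have [A hA] := vec_choice (fun i => mvt_between (c i) (a i) (hF i)).
exists A; split=> [i|]; first exact: (proj1 (hA i)).
rewrite -Rsum_sub -Rsum_add; apply: Rsum_ext => i.
by rewrite -(proj2 (hA i)); ring.
Qed.

Lemma le_of_small_perturbation (r k c : R) : 0 < r -> 0 <= k ->
  (forall s, 0 < s < r -> k - k * s <= c) -> k <= c.
Proof.
move=> hr hk h.
case: (Rle_or_lt k c) => // hc; exfalso.
have hk0 : 0 < k.
  case: (Rle_lt_or_eq_dec 0 k hk) => // e; rewrite -e in hc h.
  by have := h (r / 2) ltac:(lra); rewrite Rmult_0_l; lra.
pose s := Rmin (r / 2) ((k - c) / (2 * k)).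
have hs0 : 0 < s by apply: Rmin_glb_lt; [lra | apply: Rdiv_lt_0_compat; lra].
have hsr := Rmin_l (r / 2) ((k - c) / (2 * k)).
have hsk : k * s <= (k - c) / 2.
  have -> : (k - c) / 2 = k * ((k - c) / (2 * k)) by field; lra.
  by apply: Rmult_le_compat_l; [lra | apply: Rmin_r].
have := h s ltac:(rewrite -/s in hsr; lra); lra.
Qed.

Lemma derivative_lower_bound (k : R -> R) K L : 0 <= K ->
  derivable_pt_lim k 0 L ->
  (forall s, 0 < s < 1 -> s * (K - K * s / 2) <= k s - k 0) -> K <= L.
Proof.
move=> hK hder hinc; apply: Rle_plus_epsilon => eps heps.
have [del hdel] := hder eps heps.
have hr : 0 < Rmin 1 del / 2.
  have : 0 < Rmin 1 del by apply: Rmin_glb_lt; [lra | exact: cond_pos].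
  lra.
apply: (le_of_small_perturbation hr hK) => t ht.
have hm1 := Rmin_l 1 del; have hm2 := Rmin_r 1 del.
have hq := hdel (2 * t) ltac:(lra) ltac:(rewrite Rabs_right; lra).
rewrite Rplus_0_l in hq; have hq2 := Rabs_def2 _ _ hq.
have : K - K * t <= (k (2 * t) - k 0) / (2 * t).
  apply: (Rmult_le_reg_l (2 * t)); first lra.
  have -> : 2 * t * ((k (2 * t) - k 0) / (2 * t)) = k (2 * t) - k 0 by field; lra.
  have -> : 2 * t * (K - K * t) = 2 * t * (K - K * (2 * t) / 2) by field.
  by apply: hinc; lra.
lra.
Qed.

Lemma strongly_concave_gap D alpha (g : vec D -> R) (xbar x : vec D) : 0 <= alpha ->
  strongly_convex alpha (fun b => - g b) -> is_maximizer g xbar ->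
  alpha / 2 * norm2 (vsub x xbar) ^ 2 <= g xbar - g x.
Proof.
move=> ha hsc hmax.
apply: (le_of_small_perturbation (r := 1)); first lra.
  by apply: Rmult_le_pos; [lra | apply: pow2_ge_0].
move=> s hs.
have hconv := hsc x xbar s ltac:(lra).
have hle := hmax (segment s x xbar).
apply: (Rmult_le_reg_l s); first lra.
rewrite /segment in hle; lra.
Qed.

Lemma perturbed_maximizer D alpha (g gt : vec D -> R) (xbar x : vec D) L :
  0 <= alpha -> strongly_convex alpha (fun b => - g b) ->
  is_maximizer g xbar -> is_maximizer gt x ->
  derivable_pt_lim (fun s => g (segment s xbar x) - gt (segment s xbar x)) 0 L ->
  alpha * norm2 (vsub x xbar) ^ 2 <= L.
Proof.
move=> ha hsc hmax hmaxt hder.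
have gap := strongly_concave_gap x ha hsc hmax.
have hnorm : norm2 (vsub xbar x) = norm2 (vsub x xbar) by apply: norm2_vsubC.
apply: (derivative_lower_bound _ hder).
  by apply: Rmult_le_pos; [lra | apply: pow2_ge_0].
move=> s hs; rewrite /= segment0.
have hconv := hsc xbar x s ltac:(lra).
have hle := hmaxt (segment s xbar x).
have hgap : s * (alpha / 2 * norm2 (vsub x xbar) ^ 2) <= s * (g xbar - g x).
  by apply: Rmult_le_compat_l; lra.
rewrite hnorm /segment in hconv; rewrite /segment in hle |- *; lra.
Qed.

(* The exact and approximate log posteriors differ only in their data terms,
   so along a segment their gap has the derivative of two data terms. *)
Lemma posterior_gap_derivative N D M (X : mat N D) (W : mat D D) (Ty : Type)
  (Y : 'I_N -> Ty) (phi dphi : Ty -> R -> R) (p : vec D -> R) (u v : vec D) :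
  (forall y a, derivable_pt_lim (phi y) a (dphi y a)) ->
  derivable_pt_lim (fun s => log_post p phi X Y (segment s u v)
                             - approx_log_post M p phi X W Y (segment s u v)) 0
    (Rsum (fun n => dphi (Y n) (mulmv X v n) * mulmv X (vsub u v) n)
     - Rsum (fun n => dphi (Y n) (mulmv X (UUt M W v) n) * mulmv X (UUt M W (vsub u v)) n)).
Proof.
move=> hphi.
have hF : forall n z, derivable_pt_lim (phi (Y n)) z (dphi (Y n) z) by move=> n; apply: hphi.
apply: derivable_pt_lim_ext (derivable_pt_lim_minus _ _ _ _ _
  (data_term_derivative _ _ hF) (data_term_derivative _ _ hF)) => s.
rewrite /minus_fct /log_post /approx_log_post segmentE UUt_axpy.
by rewrite (Rsum_ext (fun n => f_equal _ (mulmv_axpy _ _ _ _ n)))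
           (Rsum_ext (fun n => f_equal _ (mulmv_axpy _ _ _ _ n))); ring.
Qed.

Lemma le_div_of_sqr_le (alpha n B : R) : 0 < alpha -> 0 <= n -> 0 <= B ->
  alpha * n ^ 2 <= B * n -> n <= B / alpha.
Proof.
move=> ha hn hB hsq; apply: (Rmult_le_reg_l alpha) => //.
rewrite /Rdiv -Rmult_assoc (Rmult_comm alpha B) Rmult_assoc Rinv_r ?Rmult_1_r; last lra.
case: (Rle_lt_or_eq_dec 0 n hn) => [hpos|<-]; last lra.
by apply: (Rmult_le_reg_r n) => //; move: hsq; rewrite /= Rmult_1_r; lra.
Qed.

Theorem mainTheorem10
  (N D M : nat) (X : mat N D) (W : mat D D) (Z : mat N N) (sigma : nat -> R)
  (Ty : Type) (Y : 'I_N -> Ty)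
  (phi dphi ddphi : Ty -> R -> R) (p : vec D -> R)
  (alpha : R) (mubar muhat : vec D) :
  (M <= D)%N ->
  is_svdT X W Z sigma ->
  (forall y a, derivable_pt_lim (phi y) a (dphi y a)) ->
  (forall y a, derivable_pt_lim (dphi y) a (ddphi y a)) ->
  (forall beta, 0 < p beta) ->
  twice_differentiable p ->
  0 < alpha ->
  strongly_convex alpha (fun beta => - log_post p phi X Y beta) ->
  is_maximizer (log_post p phi X Y) mubar ->
  is_maximizer (approx_log_post M p phi X W Y) muhat ->
  exists A : vec N,
    (forall n, between (A n) (mulmv X (UUt M W muhat) n) (mulmv X muhat n)) /\
    norm2 (vsub muhat mubar) <=
      lambar1 N D M sigma *
        (norm2 (fun n => dphi (Y n) (mulmv X muhat n))
         + lam1 N D sigma * norm2 (UbarT M W muhat)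
             * norm_inf (fun n => ddphi (Y n) (A n))) / alpha.
Proof.
move=> _ svd hphi hdphi _ _ ha hsc hmax hmaxt.
set d := vsub mubar muhat.
have hgap := perturbed_maximizer (Rlt_le _ _ ha) hsc hmax hmaxt
  (posterior_gap_derivative M X W Y p mubar muhat hphi).
have [A [hA hsplit]] := mvt_decomposition (F' := fun n => dphi (Y n))
  (F'' := fun n => ddphi (Y n)) (mulmv X muhat) (mulmv X d)
  (mulmv X (UUt M W muhat)) (mulmv X (UUt M W d)) (fun n => hdphi (Y n)).
exists A; split=> //.
rewrite -/d hsplit in hgap.
have hd : norm2 d = norm2 (vsub muhat mubar) by apply: norm2_vsubC.
have grad := cauchy_schwarz (fun n => dphi (Y n) (mulmv X muhat n))
  (fun n => mulmv X d n - mulmv X (UUt M W d) n).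
have hess := weighted_sum_le (fun n => ddphi (Y n) (A n))
  (fun n => mulmv X muhat n - mulmv X (UUt M W muhat) n) (mulmv X (UUt M W d)).
have res_d := Rle_trans _ _ _ (norm_residual_le M svd d)
  (Rmult_le_compat_l _ _ _ (lambar1_ge0 M svd) (norm_UbarT_le M d (svd_orthogonal svd))).
have res_muhat := norm_residual_le M svd muhat.
have proj_d := norm_projected_le M svd d.
rewrite hd in res_d proj_d.
have lb0 := lambar1_ge0 M svd; have l10 := lam1_ge0 svd.
apply: le_div_of_sqr_le => //; first exact: norm2_ge0.
  apply: Rmult_le_pos lb0 (Rplus_le_le_0_compat _ _ (norm2_ge0 _) _).
  exact: Rmult_le_pos (Rmult_le_pos _ _ l10 (norm2_ge0 _)) (norm_inf_ge0 _).
have grad' := Rmult_le_compat_l _ _ _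
  (norm2_ge0 (fun n => dphi (Y n) (mulmv X muhat n))) res_d.
have hess' := Rmult_le_compat_l _ _ _ (norm_inf_ge0 (fun n => ddphi (Y n) (A n)))
  (Rmult_le_compat _ _ _ _ (norm2_ge0 _) (norm2_ge0 _) res_muhat proj_d).
lra.
Qed.
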